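(* Let $s,d,t\ge1$, let $I=(G,D,\mathsf{cost},\mathsf{supply},\mathsf{demand})$ be an $(s,d)$-decent instance of Min Weight Generalized Domination and $Y\subseteq V(I)$. If every connected component $C$ of $G\setminus Y$ satisfies $|N(C)|\le t$, then the compressed instance $I\{Y\}$ is $(st,\,d+4^{st})$-decent.
   Context: An instance of Min Weight Generalized Domination consists of a loopless multigraph $G$ and for every vertex $u$: a finite domain $D_u$, $\mathsf{cost}_u\colon D_u\to\mathbb{R}_{\ge0}\cup\{+\infty\}$, and $\mathsf{supply}_u,\mathsf{demand}_u\colon D_u\to 2^{\delta(u)}$ ($\delta(u)$ = edges incident to $u$), with some $s_u\in D_u$ having $\mathsf{supply}_u(s_u)=\delta(u)$ and finite cost. Validity of a valuation on edge $e$ with endpoints $u,v$: $e\in\mathsf{demand}_u(\phi(u))\Rightarrow e\in\mathsf{supply}_v(\phi(v))$ and symmetrically; a valuation of $A$ is locally correct on $A$ if this holds for all edges inside $A$; costs are summed. A vertex is $(s,d)$-meager if $|\delta(u)|\le s$ and $|D_u|\le d$; state-monotonous if for all ordered $x_1,x_2\in D_u$ there is $x\in D_u$ with $\mathsf{cost}_u(x)\le\mathsf{cost}_u(x_1)+\mathsf{cost}_u(x_2)$, $\mathsf{supply}_u(x)=\mathsf{supply}_u(x_1)\cup\mathsf{supply}_u(x_2)$, $\mathsf{demand}_u(x)\subseteq\mathsf{demand}_u(x_1)$. An instance is $(s,d)$-decent if all vertices are $(s,d)$-meager and state-monotonous. For $R$ and $S=N(R)$, $E(R,S)$ is the set of edges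 between them and $\mathsf{interaction}_{R,S}(\phi)$ maps each $e\in E(R,S)$ with endpoint $u\in R$ to the subset of $\{\mathsf{Supply},\mathsf{Demand}\}$ containing $\mathsf{Supply}$ iff $e\in\mathsf{supply}_u(\phi(u))$ and $\mathsf{Demand}$ iff $e\in\mathsf{demand}_u(\phi(u))$. The compressed instance $I\{Y\}$: vertices of $Y$ keep domains, costs, supplies, demands and all incident edges (edges inside $Y$ kept). Each connected component $C_i$ of $G\setminus Y$ with nonempty $S_i=N(C_i)$ is collapsed (identified into one vertex, internal edges deleted) to a vertex $u_i$ incident exactly to the edges $E(C_i,S_i)$, with domain $(2^{\{\mathsf{Supply},\mathsf{Demand}\}})^{E(C_i,S_i)}$, $\mathsf{cost}_{u_i}(x)$ the minimum cost of a valuation of $C_i$ locally correct on $C_i$ with interaction $x$ (or $+\infty$), $\mathsf{supply}_{u_i}(x)=\{e\colon\mathsf{Supply}\in x(e)\}$, $\mathsf{demand}_{u_i}(x)=\{e\colon\mathsf{Demand}\in x(e)\}$. All components with empty neighborhood are collapsed together into one isolated vertex $u_\ominus$ with a one-element domain, whose cost is the minimum cost of a locally correct valuation of their union. *)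

From HB Require Import structures.
From mathcomp Require Import all_boot all_order all_algebra.
From mathcomp Require Import reals constructive_ereal.
Set Implicit Arguments. Unset Strict Implicit. Unset Printing Implicit Defensive.
Import Order.TTheory GRing.Theory Num.Theory.

Inductive SD := Supply | Demand.
Definition SD_to_bool (x : SD) := if x is Supply then true else false.
Definition bool_to_SD (b : bool) := if b then Supply else Demand.
Lemma SD_K : cancel SD_to_bool bool_to_SD. Proof. by case. Qed.
HB.instance Definition _ := Finite.copy SD (can_type SD_K).

Section Instances.
Variable R : realType.
Local Open Scope ereal_scope.

Record instance := Instance {
  vert : finType;
  edge : finType;
  src : edge -> vert;
  tgt : edge -> vert;
  dom : vert -> finType;
  cost : forall u, dom u -> \bar R;
  supply : forall u, dom u -> {set edge};
  demand : forall u, dom u -> {set edge} }.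

Variable I : instance.

Definition inc (u : vert I) : {set edge I} :=
  [set e | (src e == u) || (tgt e == u)].

Definition wf_instance : Prop :=
  [/\ forall e : edge I, src e != tgt e,
      forall (u : vert I) (x : @dom I u), supply x \subset inc u /\ demand x \subset inc u,
      forall (u : vert I) (x : @dom I u), 0 <= cost x
    & forall u : vert I, exists s_u : @dom I u, supply s_u = inc u /\ cost s_u < +oo].

Definition meager (s d : nat) (u : vert I) : Prop :=
  (#|inc u| <= s)%N /\ (#|@dom I u| <= d)%N.

Definition state_monotonous (u : vert I) : Prop :=
  forall x1 x2 : @dom I u, exists x : @dom I u,
    [/\ cost x <= cost x1 + cost x2,
        supply x = supply x1 :|: supply x2
      & demand x \subset demand x1].

Definition decent (s d : nat) : Prop :=
  forall u : vert I, meager s d u /\ state_monotonous u.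

Definition valuation := {dffun forall u : vert I, @dom I u}.

Definition valid_on (phi : valuation) (e : edge I) : bool :=
  ((e \in demand (phi (src e))) ==> (e \in supply (phi (tgt e)))) &&
  ((e \in demand (phi (tgt e))) ==> (e \in supply (phi (src e)))).

Definition locally_correct (A : {set vert I}) (phi : valuation) : bool :=
  [forall e : edge I, ((src e \in A) && (tgt e \in A)) ==> valid_on phi e].

Definition adj (u v : vert I) : bool :=
  [exists e : edge I, ((src e == u) && (tgt e == v)) || ((src e == v) && (tgt e == u))].

Definition NB (A : {set vert I}) : {set vert I} :=
  [set v | (v \notin A) && [exists u in A, adj u v]].

Definition adjY (Y : {set vert I}) : rel (vert I) :=
  fun a b => [&& a \notin Y, b \notin Y & adj a b].

Definition compof (Y : {set vert I}) (v : vert I) : {set vert I} :=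
  [set w | connect (adjY Y) v w].

Definition comps (Y : {set vert I}) : {set {set vert I}} :=
  [set compof Y v | v in ~: Y].

Definition compsN (Y : {set vert I}) : {set {set vert I}} :=
  [set C in comps Y | NB C != set0].

Definition U0 (Y : {set vert I}) : {set vert I} :=
  \bigcup_(C in comps Y | NB C == set0) C.

Definition ECS (C : {set vert I}) : {set edge I} :=
  [set e | ((src e \in C) && (tgt e \in NB C)) || ((tgt e \in C) && (src e \in NB C))].

Definition ECSt (C : {set vert I}) := {e : edge I | e \in ECS C}.

Definition interaction (C : {set vert I}) (phi : valuation)
  : {ffun ECSt C -> {set SD}} :=
  [ffun e : ECSt C =>
     let u := if src (val e) \in C then src (val e) else tgt (val e) in
     [set tg : SD | if tg is Supply then val e \in supply (phi u)
                    else val e \in demand (phi u)]].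

(* minimum cost of a valuation of C, locally correct on C, with interaction x.
   (A valuation of C is the restriction of a valuation of V(I); domains are
   nonempty for well-formed instances.) *)
Definition comp_cost (C : {set vert I}) (x : {ffun ECSt C -> {set SD}}) : \bar R :=
  \big[Order.min/+oo]_(phi : valuation | locally_correct C phi && (interaction C phi == x))
     (\sum_(u in C) cost (phi u)).

Definition ominus_cost (Y : {set vert I}) : \bar R :=
  \big[Order.min/+oo]_(phi : valuation | locally_correct (U0 Y) phi)
     (\sum_(u in U0 Y) cost (phi u)).

Section Compress.
Variable Y : {set vert I}.

Definition Ysub := {x : vert I | x \in Y}.
Definition Csub := {C : {set vert I} | C \in compsN Y}.
(* vertices of I{Y}: Y, one vertex u_i per component with nonempty
   neighbourhood, and the isolated vertex u_ominus *)
Definition cvert : finType := Finite.clone ((Ysub + Csub) + unit)%type _.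
Definition cedge : finType := Finite.clone {e : edge I | (src e \in Y) || (tgt e \in Y)} _.

Definition vmap (v : vert I) : cvert :=
  if (insub v : option Ysub) is Some y then inl (inl y)
  else if (insub (compof Y v) : option Csub) is Some C then inl (inr C)
  else inr tt.

Definition cdom (w : cvert) : finType :=
  match w with
  | inl (inl y) => @dom I (val y)
  | inl (inr C) => Finite.clone {ffun ECSt (val C) -> {set SD}} _
  | inr _ => Finite.clone unit _
  end.

Definition ccost (w : cvert) : cdom w -> \bar R :=
  match w as w return cdom w -> \bar R with
  | inl (inl y) => fun x => cost x
  | inl (inr C) => fun x => comp_cost x
  | inr _ => fun _ => ominus_cost Y
  end.

Definition csupply (w : cvert) : cdom w -> {set cedge} :=
  match w as w return cdom w -> {set cedge} with
  | inl (inl y) => fun x => [set e : cedge | val e \in supply x]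
  | inl (inr C) => fun x => [set e : cedge |
       if (insub (val e) : option (ECSt (val C))) is Some e0 then Supply \in x e0 else false]
  | inr _ => fun _ => set0
  end.

Definition cdemand (w : cvert) : cdom w -> {set cedge} :=
  match w as w return cdom w -> {set cedge} with
  | inl (inl y) => fun x => [set e : cedge | val e \in demand x]
  | inl (inr C) => fun x => [set e : cedge |
       if (insub (val e) : option (ECSt (val C))) is Some e0 then Demand \in x e0 else false]
  | inr _ => fun _ => set0
  end.

Definition compress : instance :=
  @Instance cvert cedge (fun e => vmap (src (val e))) (fun e => vmap (tgt (val e)))
    cdom ccost csupply cdemand.

End Compress.
End Instances.

From HB Require Import structures.
From mathcomp Require Import all_boot all_order all_algebra.
From mathcomp Require Import reals constructive_ereal.
Set Implicit Arguments. Unset Strict Implicit. Unset Printing Implicit Defensive.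
Import Order.TTheory GRing.Theory Num.Theory.

(* Vertices of Y keep their states, so they stay meager and monotonous.  A
   component C with nonempty neighbourhood becomes a vertex whose incident edges
   are the edges from C to N(C) ⊆ Y, hence at most s·|N(C)| ≤ st of them, and
   whose states are the 4^|E(C,N(C))| ≤ 4^(st) interactions.  Monotonicity of
   such a vertex is inherited from the vertices of C: merge two optimal
   valuations of C vertex by vertex; supplies only grow and demands only shrink,
   so local correctness survives and the costs add up.  The vertex for the
   components without neighbours is isolated and has a single state. *)

Lemma card_bigcup_leq (T J : finType) (A : {set J}) (F : J -> {set T}) k :
  (forall j, j \in A -> #|F j| <= k)%N -> (#|\bigcup_(j in A) F j| <= #|A| * k)%N.
Proof.
move=> leFk; rewrite -sum_nat_const.
apply: (@leq_trans (\sum_(j in A) #|F j|)); last exact: leq_sum.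
elim/big_rec2: _ => [|j X n _ IH]; first by rewrite cards0.
by apply: leq_trans (leq_card_setU _ _) _; rewrite leq_add2l.
Qed.

Lemma card_setSD : #|{: {set SD}}| = 4.
Proof.
have SD_bool : bijective SD_to_bool by exists bool_to_SD => -[].
by rewrite -cardsT -powersetT card_powerset cardsT (bij_eq_card SD_bool) card_bool.
Qed.

Section Components.
Variables (R : realType) (I : instance R) (Y : {set vert I}).

Lemma adj_src_tgt (e : edge I) : adj (src e) (tgt e).
Proof. by apply/existsP; exists e; rewrite !eqxx. Qed.

Lemma adj_tgt_src (e : edge I) : adj (tgt e) (src e).
Proof. by apply/existsP; exists e; rewrite !eqxx orbT. Qed.

Lemma mem_compof v : v \in compof Y v.
Proof. by rewrite inE connect0. Qed.

Lemma compof_notin v w : v \notin Y -> w \in compof Y v -> w \notin Y.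
Proof.
move=> vY; rewrite inE => /connectP [p + ->] {w}.
by elim: p v vY => [|a p IH] v vY //= /andP [/and3P [_ aY _] /IH]; apply.
Qed.

Lemma compof_comps v : v \notin Y -> compof Y v \in comps Y.
Proof. by move=> vY; apply/imsetP; exists v; rewrite ?inE. Qed.

Lemma comps_notin C x : C \in comps Y -> x \in C -> x \notin Y.
Proof. by case/imsetP => v; rewrite inE => vY ->; apply: compof_notin. Qed.

Lemma NB_comps C x y : C \in comps Y -> x \in C -> y \in Y -> adj x y -> y \in NB C.
Proof.
move=> CY xC yY xy; rewrite inE; apply/andP; split.
  by apply: contraTN yY => /(comps_notin CY).
by apply/existsP; exists x; rewrite xC.
Qed.

Lemma NB_compof v y : v \notin Y -> y \in Y -> adj v y -> y \in NB (compof Y v).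
Proof. by move=> vY; apply: NB_comps (compof_comps vY) (mem_compof v). Qed.

Lemma ECS_sub_bigcup_inc (C : {set vert I}) : ECS C \subset \bigcup_(v in NB C) inc v.
Proof.
apply/subsetP => e; rewrite inE => /orP [] /andP [_ eNB]; apply/bigcupP.
  by exists (tgt e); rewrite // inE eqxx orbT.
by exists (src e); rewrite // inE eqxx.
Qed.

End Components.

Lemma bigmin_attained (J : finType) d (X : orderType d) (x : X) (P : pred J)
    (F : J -> X) j0 :
  P j0 -> (forall j, P j -> F j <= x)%O ->
  exists2 j, P j & \big[Order.min/x]_(j | P j) F j = F j.
Proof.
move=> Pj0 /(bigmin_eq_arg x j0 P F Pj0) ->.
by exists [arg min_(j < j0 | P j) F j]%O; case: arg_minP.
Qed.

Section Costs.
Variables (R : realType) (I : instance R).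
Local Open Scope ereal_scope.
Hypothesis cost_ge0 : forall u (x : @dom R I u), 0 <= cost x.

Lemma bigmin_cost_ge0 (P : pred (valuation I)) (A : {set vert I}) :
  0 <= \big[Order.min/+oo]_(phi | P phi) \sum_(u in A) cost (phi u).
Proof.
elim/big_ind: _ => [|a b a0 b0|phi _]; first exact: leey.
  by rewrite le_min a0 b0.
by apply: sume_ge0 => u _.
Qed.

Lemma locally_correct_weaken (A : {set vert I}) (phi psi : valuation I) :
  (forall u, supply (phi u) \subset supply (psi u)) ->
  (forall u, demand (psi u) \subset demand (phi u)) ->
  locally_correct A phi -> locally_correct A psi.
Proof.
move=> supS demS /forallP lc; apply/forallP => e; apply/implyP => /(implyP (lc e)).
case/andP => /implyP s_t /implyP t_s; apply/andP; split; apply/implyP => dem.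
  exact/(subsetP (supS _))/s_t/(subsetP (demS _)).
exact/(subsetP (supS _))/t_s/(subsetP (demS _)).
Qed.

Lemma merge_valuations (phi1 phi2 : valuation I) :
  (forall u : vert I, state_monotonous u) ->
  exists psi : valuation I,
    [/\ forall u, cost (psi u) <= cost (phi1 u) + cost (phi2 u),
        forall u, supply (psi u) = supply (phi1 u) :|: supply (phi2 u)
      & forall u, demand (psi u) \subset demand (phi1 u)].
Proof.
move=> mono; have [f f_merge] := fin_all_exists (fun u => mono u (phi1 u) (phi2 u)).
by exists (finfun f); split=> u; rewrite ffunE; case: (f_merge u).
Qed.

Section Component.
Variable C : {set vert I}.

Lemma comp_cost_neq_ninfty (x : {ffun ECSt C -> {set SD}}) : comp_cost x != -oo.
Proof. by apply: contraTneq (bigmin_cost_ge0 _ C : 0 <= comp_cost x) => ->. Qed.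

Lemma comp_cost_feasible (x : {ffun ECSt C -> {set SD}}) : comp_cost x != +oo ->
  exists2 phi : valuation I, locally_correct C phi && (interaction C phi == x)
    & comp_cost x = \sum_(u in C) cost (phi u).
Proof.
pose feasible phi := locally_correct C phi && (interaction C phi == x).
case: (pickP feasible) => [phi0 feas0 _ | infeas]; last by rewrite /comp_cost big_pred0.
by apply: (@bigmin_attained _ _ _ _ feasible _ _ feas0) => phi _; apply: leey.
Qed.

Lemma comp_cost_monotonous (x1 x2 : {ffun ECSt C -> {set SD}}) :
  (forall u : vert I, state_monotonous u) ->
  exists x : {ffun ECSt C -> {set SD}},
    [/\ comp_cost x <= comp_cost x1 + comp_cost x2,
        forall e, (Supply \in x e) = (Supply \in x1 e) || (Supply \in x2 e)
      & forall e, Demand \in x e -> Demand \in x1 e].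
Proof.
move=> mono.
(* With an infinite right-hand side any interaction merging x1 and x2 will do. *)
have [inf | fin] := eqVneq (comp_cost x1 + comp_cost x2) +oo.
  exists [ffun e => [set tg : SD | if tg is Supply
            then (Supply \in x1 e) || (Supply \in x2 e) else Demand \in x1 e]].
  by split=> [|e|e]; rewrite ?inf ?leey // ffunE inE.
have [phi1 /andP [lc1 /eqP <-] ->] : exists2 phi : valuation I,
    locally_correct C phi && (interaction C phi == x1)
    & comp_cost x1 = \sum_(u in C) cost (phi u).
  apply: comp_cost_feasible; apply: contraNneq fin => ->.
  by rewrite addye ?comp_cost_neq_ninfty.
have [phi2 /andP [_ /eqP <-] ->] : exists2 phi : valuation I,
    locally_correct C phi && (interaction C phi == x2)
    & comp_cost x2 = \sum_(u in C) cost (phi u).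
  apply: comp_cost_feasible; apply: contraNneq fin => ->.
  by rewrite addey ?comp_cost_neq_ninfty.
have [psi [psi_cost psi_sup psi_dem]] := merge_valuations phi1 phi2 mono.
have lc_psi : locally_correct C psi.
  by apply: locally_correct_weaken lc1 => // u; rewrite psi_sup subsetUl.
exists (interaction C psi); split=> [|e|e].
- rewrite /comp_cost; apply: le_trans (@bigmin_le_cond _ _ _ +oo psi _ _ _) _.
    by rewrite lc_psi eqxx.
  by rewrite -big_split /=; apply: lee_sum => u _; exact: psi_cost.
- by rewrite !ffunE !inE psi_sup inE.
- by rewrite !ffunE !inE; apply/subsetP.
Qed.

End Component.
End Costs.

Section Compressed.
Variables (R : realType) (I : instance R) (Y : {set vert I}).
Local Open Scope ereal_scope.

Lemma vmap_Y v y : vmap Y v = inl (inl y) -> v = val y.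
Proof. by rewrite /vmap; case: insubP => [y' _ <- [<-] //| _]; case: insubP. Qed.

Lemma vmap_comp v C : vmap Y v = inl (inr C) -> v \notin Y /\ val C = compof Y v.
Proof. by rewrite /vmap; case: insubP => [//| vY]; case: insubP => [C' _ <- [<-] //| _]. Qed.

Lemma vmap_ominus v : vmap Y v = inr tt -> v \notin Y /\ compof Y v \notin compsN Y.
Proof. by rewrite /vmap; case: insubP => [//| vY]; case: insubP. Qed.

Lemma card_inc_compress_Y (y : Ysub Y) :
  (#|@inc R (compress Y) (inl (inl y))| <= #|inc (val y)|)%N.
Proof.
rewrite -(card_imset _ val_inj); apply/subset_leq_card/subsetP => _ /imsetP [e + ->].
by rewrite !inE => /orP [] /eqP /vmap_Y ->; rewrite eqxx ?orbT.
Qed.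

Lemma compress_monotonous_Y (y : Ysub Y) :
  state_monotonous (val y) -> @state_monotonous R (compress Y) (inl (inl y)).
Proof.
move=> mono x1 x2; have [x [x_cost x_sup x_dem]] := mono x1 x2.
exists x; split=> //; first by apply/setP => e; rewrite !inE x_sup inE.
by apply/subsetP => e; rewrite !inE; apply: (subsetP x_dem).
Qed.

Lemma card_inc_compress_comp (C : Csub Y) :
  (#|@inc R (compress Y) (inl (inr C))| <= #|\bigcup_(v in NB (val C)) inc v|)%N.
Proof.
rewrite -(card_imset _ val_inj); apply/subset_leq_card/subsetP => _ /imsetP [e + ->].
have eY : (src (val e) \in Y) || (tgt (val e) \in Y) := valP e.
rewrite inE => /orP [] /eqP /vmap_comp [notY ->]; apply/bigcupP.
- have tY : tgt (val e) \in Y by rewrite (negbTE notY) in eY.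
  by exists (tgt (val e)); [apply: NB_compof (adj_src_tgt _) | rewrite inE eqxx orbT].
- have sY : src (val e) \in Y by rewrite (negbTE notY) orbF in eY.
  by exists (src (val e)); [apply: NB_compof (adj_tgt_src _) | rewrite inE eqxx].
Qed.

Lemma card_dom_compress_comp (C : Csub Y) :
  #|@dom R (compress Y) (inl (inr C))| = (4 ^ #|ECS (val C)|)%N.
Proof. by rewrite /= card_ffun card_setSD card_sig. Qed.

Lemma compress_monotonous_comp (C : Csub Y) :
  (forall u (x : @dom R I u), 0 <= cost x) -> (forall u : vert I, state_monotonous u) ->
  @state_monotonous R (compress Y) (inl (inr C)).
Proof.
move=> cost_ge0 mono x1 x2.
have [x [x_cost x_sup x_dem]] := comp_cost_monotonous cost_ge0 x1 x2 mono.
exists x; split=> //.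
  by apply/setP => e; rewrite !inE; case: insubP => // e0 _ _; apply: x_sup.
by apply/subsetP => e; rewrite !inE; case: insubP => // e0 _ _; apply: x_dem.
Qed.

Lemma inc_compress_ominus : @inc R (compress Y) (inr tt) = set0.
Proof.
apply/setP => e; rewrite !inE; apply/negbTE.
have eY : (src (val e) \in Y) || (tgt (val e) \in Y) := valP e.
apply/negP => /orP [] /eqP /vmap_ominus [notY /negP]; apply; rewrite inE compof_comps //=.
- have tY : tgt (val e) \in Y by rewrite (negbTE notY) in eY.
  by apply/set0Pn; exists (tgt (val e)); apply: NB_compof (adj_src_tgt _).
- have sY : src (val e) \in Y by rewrite (negbTE notY) orbF in eY.
  by apply/set0Pn; exists (src (val e)); apply: NB_compof (adj_tgt_src _).
Qed.

Lemma compress_monotonous_ominus :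
  (forall u (x : @dom R I u), 0 <= cost x) -> @state_monotonous R (compress Y) (inr tt).
Proof.
move=> cost_ge0 [] []; exists tt; split=> /=; last exact: sub0set.
  by apply: lee_paddl; [exact: bigmin_cost_ge0 | exact: le_refl].
by rewrite setU0.
Qed.

End Compressed.

Theorem lemma4p8 (R : realType) (I : instance R) (s d t : nat) (Y : {set vert I}) :
  (0 < s)%N -> (0 < d)%N -> (0 < t)%N ->
  wf_instance I -> decent I s d ->
  (forall C, C \in comps Y -> (#|NB C| <= t)%N) ->
  decent (compress Y) (s * t) (d + 4 ^ (s * t)).
Proof.
move=> _ d_gt0 t_gt0 [_ _ cost_ge0 _] dec NB_le.
have inc_le (u : vert I) : (#|inc u| <= s)%N by case: (dec u) => -[].
have dom_le (u : vert I) : (#|dom u| <= d)%N by case: (dec u) => -[].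
have mono (u : vert I) : state_monotonous u by case: (dec u).
case=> [[y|C]|[]].
- split; [split | exact: compress_monotonous_Y].
    by rewrite (leq_trans (card_inc_compress_Y y)) // (leq_trans (inc_le _)) ?leq_pmulr.
  by rewrite /= (leq_trans (dom_le _)) ?leq_addr.
- have bigcup_le : (#|\bigcup_(v in NB (val C)) inc v| <= s * t)%N.
    rewrite (leq_trans (card_bigcup_leq (fun v _ => inc_le v))) // mulnC leq_mul2l.
    by rewrite NB_le ?orbT //; case/setIdP: (valP C).
  split; [split | exact: compress_monotonous_comp].
    exact: leq_trans (card_inc_compress_comp C) bigcup_le.
  rewrite card_dom_compress_comp (leq_trans _ (leq_addl _ _)) // leq_pexp2l //.
  exact: leq_trans (subset_leq_card (ECS_sub_bigcup_inc _)) bigcup_le.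
- split; [split | exact: compress_monotonous_ominus].
    by rewrite inc_compress_ominus cards0.
  by rewrite /= card_unit (leq_trans d_gt0) ?leq_addr.
Qed.
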